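(* Let $p$ be a prime, $n\ge2$, $\hat{X}_{n,p}=\{\mathbf{x}\in\mathbb{Z}_p^n : (\mathbf{x}[1],\dots,\mathbf{x}[n-1])\neq(0,\dots,0)\}$ (entries indexed $0,\dots,n-1$), and $\mathcal{L}_{n,p}=\{L_{\mathbf{a}}:\mathbf{a}\in\mathbb{Z}_p^n,\ \mathbf{a}[0]=1\}$ where $L_{\mathbf{a}}:\hat{X}_{n,p}\to\{0,1\}$, $L_{\mathbf{a}}(\mathbf{x})=1$ iff $\mathbf{a}\cdot\mathbf{x}\equiv1\pmod p$. For any query function $g:\hat{X}_{n,p}\to\{-1,+1\}$, there are at most $p^{2n/3+2}$ predicates $f\in\mathcal{L}_{n,p}$ that are not $1/p^{n/3}$-independent from $g$.
   Context: For a predicate $f$ on $\hat{X}_{n,p}$ let $S_f=\{\mathbf{x}\in\hat{X}_{n,p}: f(\mathbf{x})=1\}$. A predicate $f$ is $\xi$-independent from $g$ if $\left|\mathbf{E}_{x\in S_f}[g(x)]-\mathbf{E}_{x\in\hat{X}_{n,p}}[g(x)]\right|\le\xi$, expectations taken over the uniform distribution on the indicated sets. *)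

From HB Require Import structures.
From mathcomp Require Import all_boot all_order all_algebra.
From mathcomp Require Import all_classical all_reals all_analysis.
Set Implicit Arguments. Unset Strict Implicit. Unset Printing Implicit Defensive.
Import Order.TTheory GRing.Theory Num.Theory.
Local Open Scope ring_scope.

Definition vecZp (p n : nat) := {ffun 'I_n -> 'F_p}.

Definition Xhat (p n : nat) : {set vecZp p n} :=
  [set x : vecZp p n | [exists i : 'I_n, (0 < (i : nat))%N && (x i != 0)]].

Definition dotZp (p n : nat) (a x : vecZp p n) : 'F_p := \sum_(i < n) a i * x i.

(* L_a as a predicate on Xhat (value false outside Xhat) *)
Definition La (p n : nat) (a : vecZp p n) : {ffun vecZp p n -> bool} :=
  [ffun x => (x \in Xhat p n) && (dotZp a x == 1)].

Definition Lclass (p n : nat) : {set {ffun vecZp p n -> bool}} :=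
  [set La a | a in [set a : vecZp p n | [exists i : 'I_n, ((i : nat) == 0%N) && (a i == 1)]]].

Definition Sf (p n : nat) (f : {ffun vecZp p n -> bool}) : {set vecZp p n} :=
  [set x in Xhat p n | f x].

Definition Eset (R : realType) (T : finType) (A : {set T}) (g : T -> R) : R :=
  (\sum_(x in A) g x) / #|A|%:R.

Definition xi_independent (R : realType) (p n : nat) (xi : R)
  (f : {ffun vecZp p n -> bool}) (g : vecZp p n -> R) : Prop :=
  `| Eset (Sf f) g - Eset (Xhat p n) g | <= xi.

From HB Require Import structures.
From mathcomp Require Import all_boot all_order all_algebra.
From mathcomp Require Import all_classical all_reals all_analysis.
From mathcomp Require Import ring lra.
Import Order.TTheory GRing.Theory Num.Theory.
Local Open Scope ring_scope.

(* Write x = (c, y) with c = x[0]: Xhat is the disjoint union of the lines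
   {(c, y) : c in F_p} over the y of Xhat0, and for a[0] = 1 the set S_(L_a)
   meets each line exactly once, at c = 1 - a.y.  Hence
   E_(S_(L_a)) g - E g = bias a / |Xhat0|, where bias a adds up, over the lines,
   the deviation of g from its mean on the line at that point.  Expanding
   sum_a (bias a)^2 yields correlations corr y y' that vanish as soon as some d
   with d[0] = 0 has d.y = 0 and d.y' = 1 (shifting a along d fixes the first
   factor and averages the second one to 0); otherwise y' is a multiple of y
   and corr y y' <= |A1|.  So sum_a (bias a)^2 <= p |A1| |Xhat0|
   <= p^2 |Xhat0|^2, and Chebyshev's counting argument leaves at most
   p^2 / xi^2 = p^(2n/3 + 2) predicates L_a that are not xi-independent. *)

Lemma sumr_shift {V : finZmodType} {M : nmodType} (G : V -> M) c :
  \sum_x G (c + x) = \sum_x G x.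
Proof. by rewrite [RHS](reindex_inj (addrI c)). Qed.

Lemma sumr_reflect {V : finZmodType} {M : nmodType} (G : V -> M) c :
  \sum_x G (c - x) = \sum_x G x.
Proof. by rewrite [RHS](reindex_inj (subrI c)). Qed.

Lemma sumr_sub_mean {V : zmodType} {T : finType} {f : T -> V} {m : V} :
  \sum_x f x = m *+ #|T| -> \sum_x (f x - m) = 0.
Proof. by move=> sum_f; rewrite sumrB sumr_const sum_f subrr. Qed.

Lemma sumr_sqr_sub_mean_le
    {R : realDomainType} {T : finType} {f : T -> R} {m : R} :
  \sum_x f x = m *+ #|T| -> \sum_x (f x - m) ^+ 2 <= \sum_x f x ^+ 2.
Proof.
move=> sum_f.
have -> : \sum_x (f x - m) ^+ 2 =
          \sum_x f x ^+ 2 - m * \sum_x f x - m * \sum_x (f x - m).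
  by rewrite !mulr_sumr -!sumrB; apply: eq_bigr => x _; ring.
rewrite sumr_sub_mean // mulr0 subr0 sum_f mulrnAr gerBl.
by rewrite mulrn_wge0 // -expr2 sqr_ge0.
Qed.

Lemma ler_sum_subset
    {R : numDomainType} {T : finType} {A B : {set T}} {f : T -> R} :
  B \subset A -> (forall x, 0 <= f x) -> \sum_(x in B) f x <= \sum_(x in A) f x.
Proof.
move=> sBA f_ge0; rewrite [X in _ <= X](big_setID B) /= (finset.setIidPr sBA).
by rewrite lerDl sumr_ge0.
Qed.

Section LinearPredicates.
Variables (p n : nat).
Hypothesis n_gt1 : (1 < n)%N.
Local Notation F := 'F_p.
Local Notation V := (vecZp p n).
Implicit Types (a d u w x y : V) (c t : F).

Definition i0 : 'I_n := Ordinal (ltnW n_gt1).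
Definition i1 : 'I_n := Ordinal n_gt1.

Definition upd0 (c : F) (y : V) : V := [ffun i => if i == i0 then c else y i].
Definition scalev (t : F) (d : V) : V := [ffun i => t * d i].
Definition unitv (i : 'I_n) (c : F) : V := [ffun j => if j == i then c else 0].

Definition Xhat0 : {set V} := [set y in Xhat p n | y i0 == 0].
Definition A1 : {set V} := [set a : V | a i0 == 1].

Lemma upd0_i0 c y : upd0 c y i0 = c.
Proof. by rewrite ffunE eqxx. Qed.

Lemma upd0_neq c y i : i != i0 -> upd0 c y i = y i.
Proof. by rewrite ffunE => /negbTE ->. Qed.

Lemma upd0K c c' y : upd0 c (upd0 c' y) = upd0 c y.
Proof. by apply/ffunP => i; rewrite !ffunE; case: (i == i0). Qed.

Lemma upd0_id x : upd0 (x i0) x = x.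
Proof. by apply/ffunP => i; rewrite ffunE; case: eqP => // ->. Qed.

Lemma lt0_ord_neq0 (i : 'I_n) : (0 < i)%N = (i != i0).
Proof. by rewrite lt0n -val_eqE. Qed.

Lemma XhatP x : reflect (exists2 i, i != i0 & x i != 0) (x \in Xhat p n).
Proof.
rewrite inE; apply: (iffP existsP) => -[i].
  by case/andP; rewrite lt0_ord_neq0; exists i.
by rewrite -lt0_ord_neq0 => *; exists i; apply/andP.
Qed.

Lemma upd0_Xhat c y : (upd0 c y \in Xhat p n) = (y \in Xhat p n).
Proof.
by apply/XhatP/XhatP => -[i i_neq0 xi]; exists i; rewrite // ?upd0_neq // in xi *.
Qed.

Lemma dot_upd0 a c y : a i0 = 1 -> y i0 = 0 ->
  dotZp a (upd0 c y) = c + dotZp a y.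
Proof.
move=> a0 y0; rewrite /dotZp (bigD1 i0) //= [in RHS](bigD1 i0) //=.
rewrite upd0_i0 a0 y0 mul1r mulr0 add0r.
by congr (_ + _); apply: eq_bigr => i i_neq0; rewrite upd0_neq.
Qed.

Lemma dotDl u w y : dotZp (u + w) y = dotZp u y + dotZp w y.
Proof. by rewrite /dotZp -big_split; apply: eq_bigr => i _; rewrite ffunE mulrDl. Qed.

Lemma dot_scalev t d y : dotZp (scalev t d) y = t * dotZp d y.
Proof. by rewrite /dotZp mulr_sumr; apply: eq_bigr => i _; rewrite ffunE mulrA. Qed.

Lemma dot_unitv i c y : dotZp (unitv i c) y = c * y i.
Proof.
rewrite /dotZp (bigD1 i) //= big1 ?addr0 => [|j /negbTE j_neq_i]; rewrite ffunE.
  by rewrite eqxx.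
by rewrite j_neq_i mul0r.
Qed.

Lemma in_Xhat0 y : (y \in Xhat0) = (y \in Xhat p n) && (y i0 == 0).
Proof. by rewrite inE. Qed.

Lemma sum_Xhat {M : nmodType} (G : V -> M) :
  \sum_(x in Xhat p n) G x = \sum_(y in Xhat0) \sum_(c : F) G (upd0 c y).
Proof.
rewrite (partition_big (upd0 0) (mem Xhat0)) => [|x x_in]; last first.
  by rewrite inE in_Xhat0 upd0_Xhat x_in upd0_i0.
apply: eq_bigr => y; rewrite inE in_Xhat0 => /andP[y_in /eqP y0].
rewrite (reindex_onto (upd0 ^~ y) (fun x => x i0)) => [|x /andP[_ /eqP <-]]; last first.
  by rewrite upd0K upd0_id.
apply: eq_bigl => c; rewrite upd0_Xhat upd0K upd0_i0 eqxx andbT y_in /=.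
by rewrite -[in upd0 0 y]y0 upd0_id eqxx.
Qed.

Lemma sum_Sf_La {M : nmodType} (G : V -> M) a : a \in A1 ->
  \sum_(x in Sf (La a)) G x = \sum_(y in Xhat0) G (upd0 (1 - dotZp a y) y).
Proof.
rewrite inE => /eqP a0.
transitivity (\sum_(x in Xhat p n | dotZp a x == 1) G x).
  by apply: eq_bigl => x; rewrite inE ffunE; case: (x \in Xhat p n).
rewrite big_mkcondr sum_Xhat; apply: eq_bigr => y; rewrite in_Xhat0 => /andP[_ /eqP y0].
rewrite -big_mkcond /=; apply: big_pred1 => c /=.
by rewrite dot_upd0 // eq_sym -subr_eq eq_sym.
Qed.

Lemma Lclass_eq : Lclass p n = @La p n @: A1.
Proof.
rewrite /Lclass (_ : [set a : V | _] = A1) //.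
apply/finset.setP => a; rewrite !inE; apply/existsP/idP => [[i]|a0].
  by case/andP => /eqP i_eq0; rewrite (_ : i = i0) //; apply: val_inj.
by exists i0; rewrite a0 andbT.
Qed.

Lemma card_Lclass_pred_le (P : pred {ffun V -> bool}) :
  (#|[set f in Lclass p n | P f]| <= #|[set a in A1 | P (La a)]|)%N.
Proof.
rewrite Lclass_eq (leq_trans _ (leq_imset_card (@La p n) _)) //.
apply/subset_leq_card/fintype.subsetP => _ /[!inE] /andP[/imsetP[a a1 ->] Pa].
by apply: imset_f; rewrite inE a1.
Qed.

Lemma notin_Xhat_eq0 y : y i0 = 0 -> y \notin Xhat p n -> y = 0.
Proof.
move=> y0 yNX; apply/ffunP => i; rewrite ffunE.
have [->//|i_neq0] := eqVneq i i0.
by apply/eqP; apply: contraNT yNX => yi; apply/XhatP; exists i.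
Qed.

Lemma card_Xhat0_gt0 : (0 < #|Xhat0|)%N.
Proof.
have i1_neq0 : i1 != i0 by rewrite -lt0_ord_neq0.
apply/card_gt0P; exists (unitv i1 1).
rewrite in_Xhat0 ffunE (eq_sym i0) (negbTE i1_neq0) eqxx andbT.
by apply/XhatP; exists i1; rewrite // ffunE eqxx oner_neq0.
Qed.

Lemma card_A1_le : (#|A1| <= #|F| * #|Xhat0|)%N.
Proof.
have upd0_inj : {in A1 &, injective (upd0 0)}.
  move=> a a' /[!inE] /eqP a0 /eqP a'0 eq_a.
  by rewrite -[a]upd0_id -[a']upd0_id a0 a'0 -(upd0K 1 0 a) eq_a upd0K.
have sub : upd0 0 @: A1 \subset (0 : V) |: Xhat0.
  apply/fintype.subsetP => _ /imsetP[a _ ->].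
  rewrite in_setU1 in_Xhat0 upd0_i0 eqxx andbT orbC.
  by case: (boolP (_ \in _)) => //= /(notin_Xhat_eq0 _ (upd0_i0 _ _)) ->.
rewrite -(card_in_imset upd0_inj) (leq_trans (subset_leq_card sub)) // cardsU1.
apply: (@leq_trans (2 * #|Xhat0|)); last by rewrite leq_mul2r card_finNzRing_gt1 orbT.
by rewrite mul2n -addnn leq_add2r (leq_trans (leq_b1 _) card_Xhat0_gt0).
Qed.

Lemma card_F_gt0 : (0 < #|F|)%N.
Proof. exact: ltnW (card_finNzRing_gt1 F). Qed.

Lemma A1_addr a d : d i0 = 0 -> (a + d \in A1) = (a \in A1).
Proof. by move=> d0; rewrite !inE ffunE d0 addr0. Qed.

Lemma sum_A1_addr {M : nmodType} (G : V -> M) d : d i0 = 0 ->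
  \sum_(a in A1) G (a + d) = \sum_(a in A1) G a.
Proof.
move=> d0; rewrite [RHS](reindex_inj (addIr d)) /=.
by apply: eq_bigl => a; rewrite A1_addr.
Qed.

Lemma sum_A1_line {M : nmodType} (G : V -> M) d : d i0 = 0 ->
  (\sum_(a in A1) G a) *+ #|F| = \sum_(a in A1) \sum_t G (a + scalev t d).
Proof.
move=> d0; rewrite exchange_big /= -sumr_const; apply: eq_bigr => t _.
by rewrite sum_A1_addr // ffunE d0 mulr0.
Qed.

Lemma sum_A1_dot_uniform {M : nmodType} (G : F -> M) d y :
  d i0 = 0 -> dotZp d y = 1 ->
  (\sum_(a in A1) G (dotZp a y)) *+ #|F| = (\sum_c G c) *+ #|A1|.
Proof.
move=> d0 dy; rewrite (sum_A1_line _ _ d0) -sumr_const; apply: eq_bigr => a _.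
rewrite -(sumr_shift G (dotZp a y)).
by apply: eq_bigr => t _; rewrite dotDl dot_scalev dy mulr1.
Qed.

Lemma sum_A1_dot_orthogonal {R : numDomainType} (G H : F -> R) d y y' :
  d i0 = 0 -> dotZp d y = 0 -> dotZp d y' = 1 -> \sum_c H c = 0 ->
  \sum_(a in A1) G (dotZp a y) * H (dotZp a y') = 0.
Proof.
move=> d0 dy dy' sumH.
have /eqP : (\sum_(a in A1) G (dotZp a y) * H (dotZp a y')) *+ #|F| = 0.
  rewrite (sum_A1_line _ _ d0) big1 // => a _.
  under eq_bigr do rewrite !dotDl !dot_scalev dy dy' mulr0 addr0 mulr1.
  by rewrite -mulr_sumr sumr_shift sumH mulr0.
by rewrite mulrn_eq0 eqn0Ngt card_F_gt0 => /eqP.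
Qed.

Lemma exists_dot1 y : y \in Xhat0 -> exists2 d : V, d i0 = 0 & dotZp d y = 1.
Proof.
rewrite in_Xhat0 => /andP[/XhatP[i i_neq0 yi] _].
exists (unitv i (y i)^-1); last by rewrite dot_unitv mulVf.
by rewrite ffunE eq_sym (negbTE i_neq0).
Qed.

Definition separated y y' : bool :=
  [exists d : V, [&& d i0 == 0, dotZp d y == 0 & dotZp d y' == 1]].

Lemma not_separated_scalev y y' : y \in Xhat0 -> y' i0 = 0 ->
  ~~ separated y y' -> exists l : F, y' = scalev l y.
Proof.
rewrite in_Xhat0 => /andP[/XhatP[i i_neq0 yi] /eqP y0] y'0 not_sep.
exists (y' i / y i); apply/ffunP => j; rewrite ffunE; apply/eqP.
apply: contraNT not_sep => y'j_neq.
have j_neq0 : j != i0 by apply: contraNneq y'j_neq => ->; rewrite y0 y'0 mulr0.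
have det_neq0 : y i * y' j - y j * y' i != 0.
  apply: contra y'j_neq; rewrite subr_eq0 => /eqP det0.
  by apply/eqP/(mulfI yi); rewrite det0; field.
set c := (y i * y' j - y j * y' i)^-1.
apply/existsP; exists (unitv j (c * y i) + unitv i (- (c * y j))).
rewrite !dotDl !dot_unitv !ffunE (eq_sym i0 j) (negbTE j_neq0).
rewrite (eq_sym i0 i) (negbTE i_neq0) addr0 eqxx /=.
apply/andP; split; apply/eqP; first ring.
by rewrite -(mulVf det_neq0) -/c; ring.
Qed.

Lemma card_not_separated_le y : y \in Xhat0 ->
  (#|[set y' in Xhat0 | ~~ separated y y']| <= #|F|)%N.
Proof.
move=> y_in; rewrite -cardsT (leq_trans _ (leq_imset_card (scalev ^~ y) _)) //.
apply/subset_leq_card/fintype.subsetP => y'; rewrite inE in_Xhat0.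
case/andP=> /andP[_ /eqP y'0] /(not_separated_scalev _ _ y_in y'0)[l ->].
exact: imset_f.
Qed.

Section Bias.
Variables (R : realType) (g : V -> R).
Hypothesis g_sqr_le1 : forall x, x \in Xhat p n -> g x ^+ 2 <= 1.

Definition line_mean y : R := (\sum_c g (upd0 c y)) / #|F|%:R.
Definition dev y c : R := g (upd0 c y) - line_mean y.
Definition bias a : R := \sum_(y in Xhat0) dev y (1 - dotZp a y).
Definition corr y y' : R :=
  \sum_(a in A1) dev y (1 - dotZp a y) * dev y' (1 - dotZp a y').

Lemma card_F_neq0 : (#|F|%:R : R) != 0.
Proof. by rewrite pnatr_eq0 -lt0n card_F_gt0. Qed.

Lemma sum_line y : \sum_c g (upd0 c y) = line_mean y *+ #|F|.
Proof. by rewrite -mulr_natr divfK ?card_F_neq0. Qed.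

Lemma sum_dev y : \sum_c dev y c = 0.
Proof. exact: sumr_sub_mean (sum_line y). Qed.

Lemma sum_dev_sqr_le y : y \in Xhat0 -> \sum_c dev y c ^+ 2 <= #|F|%:R.
Proof.
rewrite in_Xhat0 => /andP[y_in _].
apply: le_trans (sumr_sqr_sub_mean_le (sum_line y)) _.
rewrite -[X in _ <= X]sumr_const; apply: ler_sum => c _.
by apply: g_sqr_le1; rewrite upd0_Xhat.
Qed.

Lemma Eset_bias a : a \in A1 ->
  Eset (Sf (La a)) g - Eset (Xhat p n) g = bias a / #|Xhat0|%:R.
Proof.
move=> a1.
have card_Sf : #|Sf (La a)| = #|Xhat0| by rewrite -!sum1_card (sum_Sf_La _ _ a1).
have card_Xhat : #|Xhat p n| = (#|Xhat0| * #|F|)%N.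
  by rewrite -sum1_card sum_Xhat -sum_nat_const; apply: eq_bigr => y _; rewrite sum1_card.
have Y_neq0 : (#|Xhat0|%:R : R) != 0 by rewrite pnatr_eq0 -lt0n card_Xhat0_gt0.
rewrite /Eset (sum_Sf_La _ _ a1) sum_Xhat card_Sf card_Xhat /bias /dev sumrB natrM.
under [X in _ - X / _]eq_bigr do rewrite sum_line.
rewrite sumrMnl -mulr_natr; field.
by rewrite Y_neq0 card_F_neq0.
Qed.

Lemma sum_bias_sqr :
  \sum_(a in A1) bias a ^+ 2 = \sum_(y in Xhat0) \sum_(y' in Xhat0) corr y y'.
Proof.
under eq_bigr do rewrite expr2 mulr_suml; rewrite exchange_big /=.
apply: eq_bigr => y _.
by under eq_bigr do rewrite mulr_sumr; rewrite exchange_big.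
Qed.

Lemma corr_separated y y' : separated y y' -> corr y y' = 0.
Proof.
case/existsP => d /and3P[/eqP d0 /eqP dy /eqP dy'].
rewrite /corr; apply: (sum_A1_dot_orthogonal
  (fun t => dev y (1 - t)) (fun t => dev y' (1 - t)) _ _ _ d0 dy dy').
by rewrite (sumr_reflect (dev y')) sum_dev.
Qed.

Lemma sum_A1_dev_sqr_le y : y \in Xhat0 ->
  \sum_(a in A1) dev y (1 - dotZp a y) ^+ 2 <= #|A1|%:R.
Proof.
move=> y_in; have [d d0 dy] := exists_dot1 _ y_in.
rewrite -(ler_pMn2r card_F_gt0).
rewrite (sum_A1_dot_uniform (fun t => dev y (1 - t) ^+ 2) _ _ d0 dy).
rewrite (sumr_reflect (fun c => dev y c ^+ 2)) -[X in _ <= X]mulr_natr.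
by rewrite [X in _ <= X]mulrC mulr_natr ler_wMn2r // sum_dev_sqr_le.
Qed.

Lemma corr_le y y' : y \in Xhat0 -> y' \in Xhat0 -> corr y y' <= #|A1|%:R.
Proof.
move=> y_in y'_in; have := sum_A1_dev_sqr_le _ y_in; have := sum_A1_dev_sqr_le _ y'_in.
have : corr y y' *+ 2 <= \sum_(a in A1) dev y (1 - dotZp a y) ^+ 2 +
                         \sum_(a in A1) dev y' (1 - dotZp a y') ^+ 2.
  rewrite /corr -sumrMnl -big_split; apply: ler_sum => a _ /=.
  set u := dev y _; set v := dev y' _.
  by have := sqr_ge0 (u - v); rewrite sqrrB !mulr2n; lra.
lra.
Qed.

Lemma sum_bias_sqr_le :
  \sum_(a in A1) bias a ^+ 2 <= (#|A1| * #|F| * #|Xhat0|)%:R.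
Proof.
rewrite sum_bias_sqr natrM mulr_natr -sumr_const; apply: ler_sum => y y_in.
rewrite (bigID (separated y)) /= big1 ?add0r => [|y' /andP[_ sep]]; last first.
  exact: corr_separated.
apply: (@le_trans _ _ (\sum_(y' in [set y' in Xhat0 | ~~ separated y y']) #|A1|%:R)).
  rewrite [X in _ <= X](eq_bigl (fun y' => (y' \in Xhat0) && ~~ separated y y'));
    last by move=> y'; rewrite inE.
  by apply: ler_sum => y' /andP[y'_in _]; apply: corr_le.
rewrite sumr_const -mulrnA ler_nat leq_mul2l.
by rewrite card_not_separated_le ?orbT.
Qed.

Lemma dependent_bias_sqr_ge (xi : R) a : 0 <= xi -> a \in A1 ->
  ~ xi_independent xi (La a) g -> (xi * #|Xhat0|%:R) ^+ 2 <= bias a ^+ 2.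
Proof.
move=> xi_ge0 a1 dep; have Y_gt0 : (0 : R) < #|Xhat0|%:R by rewrite ltr0n card_Xhat0_gt0.
have : xi < `|bias a / #|Xhat0|%:R|.
  by rewrite ltNge; apply: contra_notN dep => le; rewrite /xi_independent Eset_bias.
rewrite normrM normfV (gtr0_norm Y_gt0) ltr_pdivlMr // => lt.
rewrite -(real_normK (num_real (bias a))) ler_sqr ?nnegrE ?(ltW lt) //.
by rewrite mulr_ge0 // ltW.
Qed.

Lemma card_Lclass_dependent_le (xi : R) : 0 <= xi ->
  #|[set f in Lclass p n | ~~ `[< xi_independent xi f g >]]|%:R * xi ^+ 2
    <= #|F|%:R ^+ 2.
Proof.
move=> xi_ge0.
set B := [set a in A1 | ~~ `[< xi_independent xi (La a) g >]].
set Y : R := #|Xhat0|%:R.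
have Y_gt0 : 0 < Y by rewrite ltr0n card_Xhat0_gt0.
have sum_B : #|B|%:R * (xi * Y) ^+ 2 <= \sum_(a in A1) bias a ^+ 2.
  have sBA : B \subset A1 by apply/fintype.subsetP => a; rewrite inE => /andP[].
  apply: le_trans (ler_sum_subset sBA (fun a => sqr_ge0 (bias a))).
  rewrite mulr_natl -sumr_const; apply: ler_sum => a; rewrite inE.
  by case/andP => a1 /asboolPn; apply: dependent_bias_sqr_ge.
have A1_le : (#|A1|%:R : R) <= #|F|%:R * Y by rewrite -natrM ler_nat card_A1_le.
rewrite -(ler_pM2r (exprn_gt0 2 Y_gt0)) -mulrA -exprMn.
apply: (@le_trans _ _ (#|B|%:R * (xi * Y) ^+ 2)).
  by apply: ler_wpM2r; rewrite ?sqr_ge0 ?ler_nat ?card_Lclass_pred_le.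
apply: (le_trans sum_B); apply: (le_trans sum_bias_sqr_le).
rewrite !natrM -/Y (_ : _ ^+ 2 * _ = #|F|%:R * Y * #|F|%:R * Y); last by ring.
by apply: ler_wpM2r; [exact: ltW | apply: ler_wpM2r].
Qed.
End Bias.
End LinearPredicates.

Theorem mainTheorem4 (R : realType) (p n : nat) (g : vecZp p n -> R) :
  prime p -> (2 <= n)%N ->
  (forall x, x \in Xhat p n -> g x = 1 \/ g x = -1) ->
  (#|[set f in Lclass p n |
       ~~ `[< xi_independent ((p%:R `^ (n%:R / 3))^-1) f g >]]|%:R : R)
    <= p%:R `^ (2 * n%:R / 3 + 2).
Proof.
move=> p_prime n_ge2 g_pm1.
have g_sqr_le1 x : x \in Xhat p n -> g x ^+ 2 <= 1.
  by case/g_pm1 => ->; rewrite ?sqrrN expr1n.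
have p_gt0 : (0 : R) < p%:R by rewrite ltr0n prime_gt0.
set P := p%:R `^ (n%:R / 3).
have P_gt0 : 0 < P by rewrite powR_gt0.
have Pinv_ge0 : 0 <= P^-1 by rewrite invr_ge0 ltW.
rewrite (_ : 2 * n%:R / 3 + 2 = n%:R / 3 * 2%:R + 2%:R); last by ring.
rewrite powRD; last by rewrite (gt_eqF p_gt0) implybT.
rewrite powRrM -/P !powR_mulrn ?(ltW P_gt0) ?(ltW p_gt0) //.
have := @card_Lclass_dependent_le p n n_ge2 R g g_sqr_le1 _ Pinv_ge0.
by rewrite card_Fp // exprVn ler_pdivrMr ?exprn_gt0 // mulrC.
Qed.
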